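(* Let $F$ be an Archimedean vector lattice and $H\subset F$ an ideal. The following are equivalent: (i) $H$ is a projection band; (ii) every subset $G\subset H$ which is order bounded in $F$ is order bounded in $H$; (iii) the inclusion operator from $H$ into $F$ is an order embedding.
   Context: An ideal $H$ is a projection band if $F=H+H^d$, where $H^d=\{f\in F: |f|\wedge|h|=0\ \forall h\in H\}$. A net $(f_\alpha)$ in a vector lattice order converges to $f$ if there is a set $G$ with $\bigwedge G=0$ such that for every $g\in G$ there is $\alpha_0$ with $|f_\alpha-f|\le g$ for $\alpha\ge\alpha_0$. The inclusion of a sublattice $E$ into $F$ is an order embedding if for nets in $E$ and points of $E$, order convergence in $E$ (with respect to the order structure of $E$) is equivalent to order convergence in $F$. *)

From mathcomp Require Import all_boot all_algebra.
From mathcomp Require Import boolp classical_sets reals.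
Set Implicit Arguments. Unset Strict Implicit. Unset Printing Implicit Defensive.
Import GRing.Theory Num.Theory.
Local Open Scope ring_scope.
Local Open Scope classical_set_scope.

Section VL.
Variables (R : realType) (V : lmodType R) (le : V -> V -> Prop) (join : V -> V -> V).

Definition vector_lattice : Prop :=
  [/\ (forall x, le x x),
      (forall x y, le x y -> le y x -> x = y) /\
      (forall x y z, le x y -> le y z -> le x z),
      (forall x y z, le x y -> le (x + z) (y + z)),
      (forall (a : R) x y, 0 <= a -> le x y -> le (a *: x) (a *: y)) &
      (forall x y, [/\ le x (join x y), le y (join x y) &
                      forall z, le x z -> le y z -> le (join x y) z])].

Definition meet (x y : V) : V := - join (- x) (- y).
Definition vabs (x : V) : V := join x (- x).

Definition archimedean : Prop :=
  forall x y, le 0 x -> (forall n : nat, le (n%:R *: x) y) -> x = 0.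

Definition ideal (H : set V) : Prop :=
  [/\ H 0,
      (forall x y, H x -> H y -> H (x + y)),
      (forall (a : R) x, H x -> H (a *: x)) &
      (forall f h, H h -> le (vabs f) (vabs h) -> H f)].

Definition disj_compl (H : set V) : set V :=
  [set f | forall h, H h -> meet (vabs f) (vabs h) = 0].

Definition projection_band (H : set V) : Prop :=
  forall f, exists h, exists g, [/\ H h, disj_compl H g & f = h + g].

Definition order_bounded_in (E G : set V) : Prop :=
  exists a, exists b, [/\ E a, E b & forall g, G g -> le a g /\ le g b].

Definition inf_in (E G : set V) (m : V) : Prop :=
  [/\ E m, (forall g, G g -> le m g) &
      (forall x, E x -> (forall g, G g -> le x g) -> le x m)].

Definition directed (D : Type) (leD : D -> D -> Prop) : Prop :=
  [/\ (exists d : D, True), (forall a, leD a a),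
      (forall a b c, leD a b -> leD b c -> leD a c) &
      (forall a b, exists c, leD a c /\ leD b c)].

Definition order_conv_in (E : set V) (D : Type) (leD : D -> D -> Prop)
    (x : D -> V) (f : V) : Prop :=
  exists G : set V, [/\ G `<=` E, inf_in E G 0 &
    forall g, G g -> exists a0, forall a, leD a0 a -> le (vabs (x a - f)) g].

Definition order_embedding (E : set V) : Prop :=
  forall (D : Type) (leD : D -> D -> Prop), directed leD ->
  forall (x : D -> V) (f : V), (forall a, E (x a)) -> E f ->
    (order_conv_in E leD x f <-> order_conv_in setT leD x f).

End VL.

From mathcomp Require Import all_boot all_algebra.
From mathcomp Require Import boolp classical_sets reals.

(* Write [⊑] for the order of [F] and let (M) say: for every [c ⊒ 0], the set
   [H ∩ [0, c]] has an upper bound in [H].  All three conditions are equivalent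
   to (M).  If [c = h + d] with [d ⊥ H], then [|h|] is such a bound.  Conversely,
   for a bound [u] the element [m = u ⊓ c] of [H] satisfies [c - m ⊥ H]; as [H^d]
   is a linear subspace, writing [f = (f + |f|) - |f|] gives [F = H + H^d].
   Condition (ii) for sets [G ⊆ H] with [|g| ⊑ c] is exactly (M) for [c].
   Order convergence in an ideal always implies order convergence in [F]; under
   (M), if [inf G = 0] in [F], the elements of [H] dominating a tail of
   [|x_a - f|] have infimum [0] in [H], because each [g ∈ G] dominates one of
   them, namely [g ⊓ u] for a bound [u] of [H ∩ [0, g]].  Finally, by the
   Archimedean property the net [s / (n + 1)], indexed by the pairs
   [(s, n) ∈ (H ∩ [0, c]) × ℕ], order converges to [0] in [F]; if it converges
   in [H], some [k ∈ H] dominates it from an index [(s0, n0)] on, and then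
   [s ⊑ s ⊔ s0 ⊑ (n0 + 1) k] for all [s ∈ H ∩ [0, c]]. *)

Import GRing.Theory Num.Theory.

Set Implicit Arguments.
Unset Strict Implicit.
Unset Printing Implicit Defensive.

Local Open Scope ring_scope.
Local Open Scope classical_set_scope.

Section VectorLattice.
Variables (R : realType) (V : lmodType R) (le : V -> V -> Prop) (join : V -> V -> V).
Hypothesis hVL : vector_lattice le join.

Local Notation "x ⊑ y" := (le x y) (at level 70, no associativity).
Local Notation vabs := (vabs join).
Local Notation meet := (meet join).

Lemma vl_refl x : x ⊑ x.
Proof. by case: hVL. Qed.

Lemma vl_anti x y : x ⊑ y -> y ⊑ x -> x = y.
Proof. by case: hVL => _ [anti _] _ _ _; apply: anti. Qed.

Lemma vl_trans x y z : x ⊑ y -> y ⊑ z -> x ⊑ z.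
Proof. by case: hVL => _ [_ trans] _ _ _; apply: trans. Qed.

Lemma vl_addr x y z : x ⊑ y -> x + z ⊑ y + z.
Proof. by case: hVL => _ _ addr _ _; apply: addr. Qed.

Lemma vl_scale (a : R) x y : 0 <= a -> x ⊑ y -> a *: x ⊑ a *: y.
Proof. by case: hVL => _ _ _ scale _; apply: scale. Qed.

Lemma join_ubl x y : x ⊑ join x y.
Proof. by case: hVL => _ _ _ _ /(_ x y) []. Qed.

Lemma join_ubr x y : y ⊑ join x y.
Proof. by case: hVL => _ _ _ _ /(_ x y) []. Qed.

Lemma join_lub x y z : x ⊑ z -> y ⊑ z -> join x y ⊑ z.
Proof. by case: hVL => _ _ _ _ /(_ x y) [_ _]; apply. Qed.

Lemma vl_addl x y z : x ⊑ y -> z + x ⊑ z + y.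
Proof. by rewrite ![z + _]addrC; apply: vl_addr. Qed.

Lemma vl_add x y z t : x ⊑ y -> z ⊑ t -> x + z ⊑ y + t.
Proof. by move=> xy zt; apply: vl_trans (vl_addr z xy) (vl_addl y zt). Qed.

Lemma vl_opp x y : x ⊑ y -> - y ⊑ - x.
Proof. by move/(vl_addr (- x - y)); rewrite addrA subrr add0r addrC addrNK. Qed.

Lemma vl_subr_ge0 x y : 0 ⊑ y - x <-> x ⊑ y.
Proof.
split; first by move/(vl_addr x); rewrite add0r subrK.
by move/(vl_addr (- x)); rewrite subrr.
Qed.

Lemma vl_subr_le x y : 0 ⊑ y -> x - y ⊑ x.
Proof. by move/vl_opp/(vl_addl x); rewrite oppr0 addr0. Qed.

Lemma vl_oppr_le0 x : 0 ⊑ x -> - x ⊑ 0.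
Proof. by move/vl_opp; rewrite oppr0. Qed.

Lemma vl_scale_ge0 (a : R) x : 0 <= a -> 0 ⊑ x -> 0 ⊑ a *: x.
Proof. by move=> a0 /(vl_scale a0); rewrite scaler0. Qed.

Lemma vl_scalel (a b : R) x : 0 ⊑ x -> a <= b -> a *: x ⊑ b *: x.
Proof.
move=> x0 ab; apply/vl_subr_ge0; rewrite -scalerBl.
by apply: vl_scale_ge0 => //; rewrite subr_ge0.
Qed.

Lemma vabs_ge x : x ⊑ vabs x.
Proof. exact: join_ubl. Qed.

Lemma vabs_geN x : - x ⊑ vabs x.
Proof. exact: join_ubr. Qed.

Lemma vabs_ge0 x : 0 ⊑ vabs x.
Proof.
have := vl_add (vabs_ge x) (vabs_geN x).
rewrite subrr -mulr2n -scaler_nat => /(vl_scale_ge0 (a := 2^-1)).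
by rewrite scalerA mulVf ?pnatr_eq0 // scale1r; apply; rewrite invr_ge0 ler0n.
Qed.

Lemma ger0_vabs x : 0 ⊑ x -> vabs x = x.
Proof.
move=> x0; apply: vl_anti (vabs_ge x).
by apply: join_lub (vl_refl x) (vl_trans (vl_oppr_le0 x0) x0).
Qed.

Lemma vabs_id x : vabs (vabs x) = vabs x.
Proof. exact: ger0_vabs (vabs_ge0 x). Qed.

Lemma vabsB_le x y : vabs (x - y) ⊑ vabs x + vabs y.
Proof.
apply: join_lub; first exact: vl_add (vabs_ge x) (vabs_geN y).
by rewrite opprB [vabs x + _]addrC; apply: vl_add (vabs_ge y) (vabs_geN x).
Qed.

Lemma vabs_le_join a b g : a ⊑ g -> g ⊑ b -> vabs g ⊑ join (vabs a) (vabs b).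
Proof.
move=> ag gb; apply: join_lub.
  exact: vl_trans gb (vl_trans (vabs_ge b) (join_ubr _ _)).
exact: vl_trans (vl_opp ag) (vl_trans (vabs_geN a) (join_ubl _ _)).
Qed.

Lemma vabs_le_bounds g u : vabs g ⊑ u -> - u ⊑ g /\ g ⊑ u.
Proof.
move=> gu; split; last exact: vl_trans (vabs_ge g) gu.
by rewrite -[g]opprK; apply/vl_opp/(vl_trans (vabs_geN g)).
Qed.

Lemma meet_lbl x y : meet x y ⊑ x.
Proof. by rewrite -[x in _ ⊑ x]opprK; apply/vl_opp/join_ubl. Qed.

Lemma meet_lbr x y : meet x y ⊑ y.
Proof. by rewrite -[y in _ ⊑ y]opprK; apply/vl_opp/join_ubr. Qed.

Lemma meet_glb w x y : w ⊑ x -> w ⊑ y -> w ⊑ meet x y.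
Proof. by move=> wx wy; rewrite -[w]opprK; apply/vl_opp/join_lub; apply: vl_opp. Qed.

(* [w - d2] lies below both [d1] and [w], hence below [d1 ⊓ w = 0]. *)
Lemma disjoint_le_add_eq0 w d1 d2 : 0 ⊑ w -> 0 ⊑ d2 ->
  meet d1 w = 0 -> meet d2 w = 0 -> w ⊑ d1 + d2 -> w = 0.
Proof.
move=> w0 d20 d1w d2w wd.
have wd2 : w - d2 ⊑ 0.
  rewrite -d1w; apply: meet_glb (vl_subr_le w d20).
  by have := vl_addr (- d2) wd; rewrite addrK.
apply: vl_anti w0; rewrite -d2w; apply: meet_glb (vl_refl w).
by have := vl_addr d2 wd2; rewrite subrK add0r.
Qed.

Section Ideal.
Variable H : set V.
Hypothesis hH : ideal le join H.

Lemma ideal0 : H 0.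
Proof. by case: hH. Qed.

Lemma idealD x y : H x -> H y -> H (x + y).
Proof. by case: hH => _ addH _ _; apply: addH. Qed.

Lemma idealZ (a : R) x : H x -> H (a *: x).
Proof. by case: hH => _ _ scaleH _; apply: scaleH. Qed.

Lemma ideal_solid f h : H h -> vabs f ⊑ vabs h -> H f.
Proof. by case: hH => _ _ _ solid; apply: solid. Qed.

Lemma idealN x : H x -> H (- x).
Proof. by rewrite -scaleN1r; apply: idealZ. Qed.

Lemma idealB x y : H x -> H y -> H (x - y).
Proof. by move=> Hx /idealN; apply: idealD. Qed.

Lemma ideal_vabs x : H x -> H (vabs x).
Proof. by move=> Hx; apply: (ideal_solid Hx); rewrite vabs_id; apply: vl_refl. Qed.

Lemma ideal_le_vabs f h : H h -> 0 ⊑ f -> f ⊑ vabs h -> H f.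
Proof. by move=> Hh f0 fh; apply: (ideal_solid Hh); rewrite ger0_vabs. Qed.

Lemma ideal_le0_eq0 z : (forall y, H y -> y ⊑ 0) -> H z -> z = 0.
Proof.
move=> H_le0 Hz; apply: vl_anti (H_le0 z Hz) _.
by rewrite -oppr0 -[z]opprK; apply/vl_opp/H_le0/idealN.
Qed.

Definition ideal_interval c := [set s | [/\ H s, 0 ⊑ s & s ⊑ c]].

Definition majorized_intervals := forall c, 0 ⊑ c ->
  exists2 u, H u & forall s, ideal_interval c s -> s ⊑ u.

Lemma ideal_interval0 c : 0 ⊑ c -> ideal_interval c 0.
Proof. by move=> c0; split; [exact: ideal0 | exact: vl_refl |]. Qed.

Lemma ideal_interval_join c s t :
  ideal_interval c s -> ideal_interval c t -> ideal_interval c (join s t).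
Proof.
move=> [Hs s0 sc] [Ht t0 tc]; have st0 := vl_trans s0 (join_ubl s t).
split=> //; last exact: join_lub.
have s_st : s ⊑ s + t by rewrite -{1}[s]addr0; apply: vl_addl.
have t_st : t ⊑ s + t by rewrite -{1}[t]add0r; apply: vl_addr.
exact: ideal_le_vabs (idealD Hs Ht) st0 (vl_trans (join_lub s_st t_st) (vabs_ge _)).
Qed.

Lemma order_bounded_iff_majorized :
  (forall G, G `<=` H -> order_bounded_in le setT G -> order_bounded_in le H G)
  <-> majorized_intervals.
Proof.
split=> [bdd c c0 | maj G GH [a [b [_ _ Gab]]]].
  have IH : ideal_interval c `<=` H by move=> s [].
  have [|l [u [_ Hu Iu]]] := bdd _ IH.
    by exists 0, c; split=> // s [].
  by exists u => // s /Iu [].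
have c0 : 0 ⊑ join (vabs a) (vabs b) := vl_trans (vabs_ge0 a) (join_ubl _ _).
have [u Hu Iu] := maj _ c0.
have Gu g : G g -> vabs g ⊑ u.
  move=> Gg; have [ag gb] := Gab g Gg.
  by apply: Iu; split; [exact: ideal_vabs (GH g Gg) | exact: vabs_ge0 |
    exact: vabs_le_join].
by exists (- u), u; split; [exact: idealN | exact: Hu | move=> g /Gu/vabs_le_bounds].
Qed.

Lemma ideal_disj_complB d1 d2 :
  disj_compl join H d1 -> disj_compl join H d2 -> disj_compl join H (d1 - d2).
Proof.
move=> D1 D2 k Hk; set w := meet _ _.
have w0 : 0 ⊑ w := meet_glb (vabs_ge0 _) (vabs_ge0 _).
have Hw : H w by apply: ideal_le_vabs (ideal_vabs Hk) w0 _; rewrite vabs_id; apply: meet_lbr.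
apply: (disjoint_le_add_eq0 w0 (vabs_ge0 d2) _ _ (vl_trans (meet_lbl _ _) (vabsB_le _ _))).
  by rewrite -(ger0_vabs w0); apply: D1.
by rewrite -(ger0_vabs w0); apply: D2.
Qed.

(* The positive part of [k - |h|] lies in [H] and below [|d|], so it vanishes. *)
Lemma band_component_le h d k : disj_compl join H d -> H k ->
  k ⊑ vabs h + vabs d -> k ⊑ vabs h.
Proof.
move=> Dd Hk khd; set w := join (k - vabs h) 0.
have w0 : 0 ⊑ w := join_ubr _ _.
have Hw : H w.
  apply: ideal_le_vabs (Hk) w0 (join_lub _ (vabs_ge0 k)).
  exact: vl_trans (vl_subr_le _ (vabs_ge0 h)) (vabs_ge k).
have wd : w ⊑ vabs d.
  apply: join_lub (vabs_ge0 d) => //.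
  by have := vl_addr (- vabs h) khd; rewrite [vabs h + _]addrC addrK.
have w_le0 : w ⊑ 0 by rewrite -(Dd w Hw) (ger0_vabs w0); apply: meet_glb wd (vl_refl w).
by have := vl_addr (vabs h) (vl_trans (join_ubl _ 0) w_le0); rewrite subrK add0r.
Qed.

Lemma projection_band_majorized : projection_band join H -> majorized_intervals.
Proof.
move=> band c _; have [h [d [Hh Dd ->]]] := band c.
exists (vabs h); first exact: ideal_vabs.
move=> s [Hs _ shd]; apply: band_component_le Dd Hs _.
exact: vl_trans shd (vl_add (vabs_ge h) (vabs_ge d)).
Qed.

(* With [m = u ⊓ c], any [w ∈ H] with [0 ⊑ w ⊑ c - m] has [m + w ∈ H ∩ [0, c]],
   hence [m + w ⊑ u ⊓ c = m]. *)
Lemma majorized_positive_split c : majorized_intervals -> 0 ⊑ c ->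
  exists2 m, H m & disj_compl join H (c - m).
Proof.
move=> maj c0; have [u Hu Iu] := maj c c0.
have u0 : 0 ⊑ u := Iu 0 (ideal_interval0 c0).
set m := meet u c.
have m0 : 0 ⊑ m := meet_glb u0 c0.
have mc : m ⊑ c := meet_lbr u c.
have Hm : H m := ideal_le_vabs Hu m0 (vl_trans (meet_lbl u c) (vabs_ge u)).
exists m => // k Hk; set w := meet _ _.
have w0 : 0 ⊑ w := meet_glb (vabs_ge0 _) (vabs_ge0 _).
have Hw : H w by apply: ideal_le_vabs (ideal_vabs Hk) w0 _; rewrite vabs_id; apply: meet_lbr.
have wcm : w ⊑ c - m by rewrite -(ger0_vabs ((vl_subr_ge0 _ _).2 mc)); apply: meet_lbl.
have mwc : m + w ⊑ c by have := vl_addl m wcm; rewrite [m + (c - m)]addrC subrK.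
have mw0 : 0 ⊑ m + w by rewrite -[0]addr0; apply: vl_add.
have mwm : m + w ⊑ m := meet_glb (Iu _ (And3 (idealD Hm Hw) mw0 mwc)) mwc.
by apply: vl_anti w0; have := vl_addr (- m) mwm; rewrite subrr addrC addKr.
Qed.

Lemma majorized_projection_band : majorized_intervals -> projection_band join H.
Proof.
move=> maj f.
have pos_f : 0 ⊑ f + vabs f by rewrite -(subrr f); apply: vl_addl (vabs_geN f).
have [m1 Hm1 D1] := majorized_positive_split maj pos_f.
have [m2 Hm2 D2] := majorized_positive_split maj (vabs_ge0 f).
exists (m1 - m2), (f + vabs f - m1 - (vabs f - m2)); split.
- exact: idealB.
- exact: ideal_disj_complB.
- by rewrite opprB addrACA addKr [m1 + _]addrC subrK addrK.
Qed.

Lemma ideal_inf_in_setT G g0 : G `<=` H -> G g0 ->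
  inf_in le H G 0 -> inf_in le setT G 0.
Proof.
move=> GH Gg0 [_ G_ge0 glb]; split=> // y _ y_lb.
have y_lb' g : G g -> join y 0 ⊑ g by move=> Gg; apply: join_lub; auto.
have Hy : H (join y 0).
  apply: ideal_le_vabs (GH _ Gg0) (join_ubr _ _) _.
  exact: vl_trans (y_lb' _ Gg0) (vabs_ge _).
exact: vl_trans (join_ubl y 0) (glb _ Hy y_lb').
Qed.

Lemma ideal_order_conv_setT (D : Type) (leD : D -> D -> Prop) x f :
  directed leD -> (forall a, H (x a)) -> H f ->
  order_conv_in le join H leD x f -> order_conv_in le join setT leD x f.
Proof.
move=> [[a0 _] _ _ _] Hx Hf [G [GH infG ev]].
have [[g0 Gg0] | noG] := pselect (exists g, G g).
  by exists G; split=> //; apply: ideal_inf_in_setT Gg0 infG.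
(* [inf_H ∅ = 0] makes [0] the largest element of [H], so [H = {0}]. *)
have H_eq0 z : H z -> z = 0.
  case: infG => _ _ glb; apply: ideal_le0_eq0 => y Hy.
  by apply: glb => // g Gg; case: noG; exists g.
exists [set 0]; split=> //.
  by split=> // [g -> | y _]; [exact: vl_refl | apply].
move=> _ ->; exists a0 => a _.
by rewrite (H_eq0 _ (Hx a)) (H_eq0 _ Hf) subrr ger0_vabs; apply: vl_refl.
Qed.

Lemma majorized_order_conv_ideal (D : Type) (leD : D -> D -> Prop) x f :
  majorized_intervals -> (forall a, H (x a)) -> H f ->
  order_conv_in le join setT leD x f -> order_conv_in le join H leD x f.
Proof.
move=> maj Hx Hf [G [_ [_ G_ge0 glb] ev]].
pose tail_dom k := exists a0, forall a, leD a0 a -> vabs (x a - f) ⊑ k.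
exists [set k | [/\ H k, 0 ⊑ k & tail_dom k]].
split=> [k [] // | | k [] //].
split=> [|k [] //|y Hy y_lb]; first exact: ideal0.
apply: glb => // g Gg.
have [a0 tail_g] := ev g Gg.
have [u Hu Iu] := maj g (G_ge0 g Gg).
have u0 : 0 ⊑ u := Iu 0 (ideal_interval0 (G_ge0 g Gg)).
have k0 : 0 ⊑ meet g u := meet_glb (G_ge0 g Gg) u0.
apply: vl_trans (y_lb _ _) (meet_lbl g u); split=> //.
  by apply: ideal_le_vabs Hu k0 _; rewrite ger0_vabs //; apply: meet_lbr.
exists a0 => a a0a; apply: meet_glb (tail_g a a0a) (Iu _ _).
by split; [apply/ideal_vabs/idealB | apply: vabs_ge0 | apply: tail_g].
Qed.

Lemma majorized_order_embedding : majorized_intervals -> order_embedding le join H.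
Proof.
move=> maj D leD dirD x f Hx Hf; split.
  exact: ideal_order_conv_setT.
exact: majorized_order_conv_ideal.
Qed.

Hypothesis hArch : archimedean le.

Lemma archimedean_inf_harmonic c : 0 ⊑ c ->
  inf_in le setT [set (n.+1%:R : R)^-1 *: c | n in [set: nat]] 0.
Proof.
have inv_ge0 n : 0 <= (n.+1%:R : R)^-1 by rewrite invr_ge0 ler0n.
move=> c0; split=> // [_ [n _ <-] | y _ y_lb]; first exact: vl_scale_ge0.
apply: vl_trans (join_ubl y 0) _; rewrite (@hArch _ c (join_ubr y 0)); first exact: vl_refl.
case=> [|n]; first by rewrite scale0r.
have := vl_scale (ler0n R n.+1) (join_lub (y_lb _ (ex_intro2 _ _ n I erefl))
  (vl_scale_ge0 (inv_ge0 n) c0)).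
by rewrite scalerKV ?pnatr_eq0.
Qed.

Section HarmonicNet.
Variable c : V.
Hypothesis c0 : 0 ⊑ c.

Let net_index := ({s : V | ideal_interval c s} * nat)%type.
Let net_le (p q : net_index) := sval p.1 ⊑ sval q.1 /\ (p.2 <= q.2)%N.
Let net (p : net_index) : V := (p.2.+1%:R : R)^-1 *: sval p.1.

Lemma net_index_directed : directed net_le.
Proof.
split.
- by exists (exist _ 0 (ideal_interval0 c0), 0%N).
- by move=> p; split; [exact: vl_refl | exact: leqnn].
- by move=> p q r [pq1 pq2] [qr1 qr2]; split; [exact: vl_trans qr1 | exact: leq_trans qr2].
- move=> [[s Is] n] [[t It] m].
  exists (exist _ (join s t) (ideal_interval_join Is It), maxn n m).
  by split; split; rewrite /= ?leq_maxl ?leq_maxr //; [exact: join_ubl | exact: join_ubr].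
Qed.

Lemma net_ge0 p : 0 ⊑ net p.
Proof.
case: p => [[s Is] n] /=; have [_ s0 _] := Is.
by apply: vl_scale_ge0; rewrite // invr_ge0 ler0n.
Qed.

Lemma net_in_ideal p : H (net p).
Proof. by case: p => [[s Is] n] /=; apply: idealZ; case: Is. Qed.

Lemma net_conv_setT : order_conv_in le join setT net_le net 0.
Proof.
exists [set (n.+1%:R : R)^-1 *: c | n in [set: nat]].
split=> //; first exact: archimedean_inf_harmonic.
move=> _ [n _ <-]; exists (exist _ 0 (ideal_interval0 c0), n).
move=> p [_ /= nm]; rewrite subr0 (ger0_vabs (net_ge0 p)).
case: p nm => [[s Is] m] /= nm; have [_ _ sc] := Is.
apply: vl_trans (vl_scale _ sc) _; first by rewrite invr_ge0 ler0n.
by apply: vl_scalel c0 _; rewrite lef_pV2 ?posrE ?ltr0Sn // ler_nat.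
Qed.

Lemma order_embedding_majorizes_interval : order_embedding le join H ->
  exists2 u, H u & forall s, ideal_interval c s -> s ⊑ u.
Proof.
move=> emb.
have [G [GH [_ _ glb] ev]] :=
  (emb _ _ net_index_directed net 0 net_in_ideal ideal0).2 net_conv_setT.
have [[k Gk] | noG] := pselect (exists k, G k); last first.
  exists 0; first exact: ideal0.
  by move=> s [Hs _ _]; apply: glb => // g Gg; case: noG; exists g.
have [[[s0 Is0] n0] tail_k] := ev k Gk.
exists (n0.+1%:R *: k); first exact: idealZ (GH k Gk).
move=> s Is.
have := tail_k (exist _ (join s s0) (ideal_interval_join Is Is0), n0).
rewrite subr0 (ger0_vabs (net_ge0 _)) => /(_ (conj (join_ubr s s0) (leqnn n0))).
move/(vl_scale (ler0n R n0.+1)); rewrite scalerKV ?pnatr_eq0 //.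
exact: vl_trans (join_ubl s s0).
Qed.

End HarmonicNet.

Lemma order_embedding_majorized : order_embedding le join H -> majorized_intervals.
Proof. by move=> emb c c0; apply: order_embedding_majorizes_interval. Qed.

End Ideal.
End VectorLattice.

Theorem proposition5p4 (R : realType) (V : lmodType R)
    (le : V -> V -> Prop) (join : V -> V -> V)
    (hVL : vector_lattice le join) (hArch : archimedean le)
    (H : set V) (hH : ideal le join H) :
  (projection_band join H <->
     (forall G : set V, G `<=` H -> order_bounded_in le setT G ->
        order_bounded_in le H G)) /\
  ((forall G : set V, G `<=` H -> order_bounded_in le setT G ->
        order_bounded_in le H G) <->
     order_embedding le join H).
Proof.
have i_M : projection_band join H <-> majorized_intervals le H :=
  conj (projection_band_majorized hVL hH) (majorized_projection_band hVL hH).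
have ii_M := order_bounded_iff_majorized hVL hH.
have iii_M : order_embedding le join H <-> majorized_intervals le H :=
  conj (order_embedding_majorized hVL hH hArch) (majorized_order_embedding hVL hH).
split; first exact: iff_trans i_M (iff_sym ii_M).
exact: iff_trans ii_M (iff_sym iii_M).
Qed.
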